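(* In the odd setting below, define recursively, for all $k\in\mathbb Z$ and $\ell\ge0$, block columns $G^{(k)}_{2\ell}$, $\hat G^{(k)}_{2\ell+1}$ and $n\times n$ matrices $\alpha_i^j(k)$ by $G^{(k)}_0=r_k$, $\hat G^{(k)}_{2\ell+1}=p_k(G^{(k+1)}_{2\ell})_{\mathrm{last}}+\Gamma G^{(k+1)}_{2\ell}$, $G^{(k)}_{2\ell+2}=\Gamma\hat G^{(k+1)}_{2\ell+1}$, $\alpha_0^{2\ell+1}(k)=(G^{(k+1)}_{2\ell})_{\mathrm{last}}$, $\alpha_{2r}^{2\ell+1}(k)=\alpha_{2r-1}^{2\ell}(k+1)$ ($1\le r\le\ell$), $\alpha_{2r+1}^{2\ell+2}(k)=\alpha_{2r}^{2\ell+1}(k+1)$ ($0\le r\le\ell$). Then for all $k$ and $\ell\ge0$, $$F^{(k)}_{2\ell}=\sum_{r=1}^{\ell}F^{(k)}_{2r-1}\alpha_{2r-1}^{2\ell}(k)+G^{(k)}_{2\ell},\qquad F^{(k)}_{2\ell+1}=\sum_{r=0}^{\ell}F^{(k)}_{2r}\alpha_{2r}^{2\ell+1}(k)+\hat G^{(k)}_{2\ell+1}.$$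
   Context: Odd setting: integers $n\ge1$, $s\ge1$, $m=2s+1$. For each $k\in\mathbb Z$ let $a_k^0,\dots,a_k^{2s}$ be $n\times n$ matrices, $N$-periodic in $k$. $Q_k$ is the $mn\times mn$ block matrix with $I_n$ in blocks $(i+1,i)$, $i=1,\dots,m-1$, last block column $(a_k^0;a_k^1;\dots;a_k^{2s})$, $O_n$ elsewhere. $r_k=(a_k^0;O_n;a_k^2;O_n;\dots;O_n;a_k^{2s})$ and $p_k=(O_n;a_k^1;O_n;a_k^3;\dots;a_k^{2s-1};O_n)$ (so the last block column of $Q_k$ is $p_k+r_k$). $\Gamma$ is the $mn\times mn$ block matrix with $I_n$ in blocks $(i+1,i)$ and $O_n$ elsewhere. $F^{(k)}_0=r_k$, $F^{(k)}_\ell=Q_kQ_{k+1}\cdots Q_{k+\ell-1}r_{k+\ell}$ for $\ell\ge1$. $(A)_{\mathrm{last}}$ is the last $n\times n$ block of a block column $A$. *)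

From HB Require Import structures.
From mathcomp Require Import all_boot all_order all_algebra.
Set Implicit Arguments. Unset Strict Implicit. Unset Printing Implicit Defensive.
Import Order.TTheory GRing.Theory Num.Theory.
Local Open Scope ring_scope.

(* Block conventions: an (m*n) x (m*n) (resp. (m*n) x n) matrix is viewed as an
   m x m (resp. m x 1) array of n x n blocks; the global index
   mxvec_index i j (= i*n + j) is row j of block i.  Blocks are numbered
   from 0 here (block i here = block i+1 in the paper). *)

Section Blocks.
Variables (R : comNzRingType) (n s : nat).
Local Notation m := (s.*2.+1).
Variable a : int -> 'I_m -> 'M[R]_n.

Definition bpos (I : 'I_(m * n)) : 'I_m * 'I_n :=
  enum_val (cast_ord (esym (mxvec_cast m n)) I).

Definition Qmat (k : int) : 'M[R]_(m * n) :=
  \matrix_(I, J)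
    if (bpos J).1 == ord_max then a k (bpos I).1 (bpos I).2 (bpos J).2
    else if ((bpos I).1 == (bpos J).1.+1 :> nat) && ((bpos I).2 == (bpos J).2)
         then 1 else 0.

Definition Gam : 'M[R]_(m * n) :=
  \matrix_(I, J)
    if ((bpos I).1 == (bpos J).1.+1 :> nat) && ((bpos I).2 == (bpos J).2)
    then 1 else 0.

Definition rcol (k : int) : 'M[R]_(m * n, n) :=
  \matrix_(I, c) if ~~ odd (bpos I).1 then a k (bpos I).1 (bpos I).2 c else 0.

Definition pcol (k : int) : 'M[R]_(m * n, n) :=
  \matrix_(I, c) if odd (bpos I).1 then a k (bpos I).1 (bpos I).2 c else 0.

Definition lastblk (A : 'M[R]_(m * n, n)) : 'M[R]_n :=
  \matrix_(i, c) A (mxvec_index (ord_max : 'I_m) i) c.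

Fixpoint Qprod (k : int) (l : nat) : 'M[R]_(m * n) :=
  match l with
  | 0 => 1%:M
  | l'.+1 => Qmat k *m Qprod (k + 1) l'
  end.

Definition Fcol (k : int) (l : nat) : 'M[R]_(m * n, n) :=
  Qprod k l *m rcol (k + l%:Z).

Definition Ghat_of (g : int -> 'M[R]_(m * n, n)) (k : int) : 'M[R]_(m * n, n) :=
  pcol k *m lastblk (g (k + 1)) + Gam *m g (k + 1).

(* G2 l k = G^{(k)}_{2l} *)
Fixpoint G2 (l : nat) (k : int) : 'M[R]_(m * n, n) :=
  match l with
  | 0 => rcol k
  | l'.+1 => Gam *m Ghat_of (G2 l') (k + 1)
  end.

(* Ghat l k = hat G^{(k)}_{2l+1} *)
Definition Ghat (l : nat) (k : int) : 'M[R]_(m * n, n) := Ghat_of (G2 l) k.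

(* alpha j i k = alpha_i^j(k).  Only meaningful for j = 2l+1, i = 2r (0<=r<=l)
   and j = 2l+2, i = 2r+1 (0<=r<=l); other values are irrelevant junk. *)
Fixpoint alpha (j i : nat) (k : int) : 'M[R]_n :=
  match j with
  | 0 => 0
  | j'.+1 =>
      if ~~ odd j' && (i == 0)%N then lastblk (G2 j'./2 (k + 1))
      else alpha j' i.-1 (k + 1)
  end.

End Blocks.

(* Since [Q_k X = Gamma X + (p_k + r_k) (X)_last], one step of the product
   [F^(k)_(l+1) = Q_k F^(k+1)_l] maps an expansion of [F^(k+1)_l] into one of
   [F^(k)_(l+1)]: every [F^(k+1)_j] becomes [F^(k)_(j+1)] and the remainder [G]
   becomes [Gamma G + (p_k + r_k) (G)_last].  The columns [G_(2l)] vanish on the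
   odd-numbered blocks and [hat G_(2l+1)] on the even-numbered ones (the last
   block, number 2s, in particular), so [r_k (G_(2l))_last] is the new term
   [F_0 alpha_0], while [(hat G_(2l+1))_last = 0] and no term is added. *)

From HB Require Import structures.
From mathcomp Require Import all_boot all_order all_algebra.
Import Order.TTheory GRing.Theory Num.Theory.
Local Open Scope ring_scope.
Set Implicit Arguments. Unset Strict Implicit.

Section BlockColumns.
Variables (R : comNzRingType) (n s : nat).
Local Notation m := (s.*2.+1).
Local Notation Gam := (Gam R n s).
Variable a : int -> 'I_m -> 'M[R]_n.
Implicit Types X Y : 'M[R]_(m * n, n).

Lemma bpos_mxvec (i : 'I_m) (j : 'I_n) : bpos (mxvec_index i j) = (i, j).
Proof. by rewrite /bpos /mxvec_index cast_ordK enum_rankK. Qed.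

Lemma bpos_inj : injective (@bpos n s).
Proof. by move=> I J /enum_val_inj /cast_ord_inj. Qed.

Definition blocks_vanish (b : bool) X :=
  forall I c, odd (bpos I).1 = b -> X I c = 0.

Lemma blocks_vanishD b X Y :
  blocks_vanish b X -> blocks_vanish b Y -> blocks_vanish b (X + Y).
Proof. by move=> HX HY I c HI; rewrite mxE HX // HY // addr0. Qed.

Lemma blocks_vanish_Gam b X : blocks_vanish b X -> blocks_vanish (~~ b) (Gam *m X).
Proof.
move=> HX I c HI; rewrite mxE big1 // => J _; rewrite mxE.
case: ifP => [/andP[/eqP IJ _]|_]; last by rewrite mul0r.
by rewrite HX ?mulr0 //; move: HI; rewrite IJ /= => /negb_inj.
Qed.

Lemma blocks_vanish_pcol k (x : 'M[R]_n) : blocks_vanish false (pcol a k *m x).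
Proof. by move=> I c HI; rewrite mxE big1 // => j _; rewrite mxE HI mul0r. Qed.

Lemma blocks_vanish_rcol k : blocks_vanish true (rcol a k).
Proof. by move=> I c HI; rewrite mxE HI. Qed.

Lemma lastblk_vanish_even X : blocks_vanish false X -> lastblk X = 0.
Proof.
by move=> HX; apply/matrixP=> i c; rewrite !mxE HX // bpos_mxvec /= odd_double.
Qed.

Definition lastsel : 'M[R]_(n, m * n) :=
  \matrix_(i, J) (((bpos J).1 == ord_max) && ((bpos J).2 == i))%:R.

Lemma mul_lastsel X : lastsel *m X = lastblk X.
Proof.
apply/matrixP=> i c; rewrite !mxE (bigD1 (mxvec_index ord_max i)) //= big1.
  by rewrite mxE bpos_mxvec !eqxx mul1r addr0.
move=> J /eqP JnE; rewrite mxE.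
case: ((bpos J).1 =P ord_max) => [J1|]; last by rewrite mul0r.
case: ((bpos J).2 =P i) => [J2|]; last by rewrite mul0r.
by case: JnE; apply: bpos_inj; rewrite bpos_mxvec -J1 -J2; case: (bpos J).
Qed.

Lemma QmatE k : Qmat a k = Gam + (pcol a k + rcol a k) *m lastsel.
Proof.
apply/matrixP=> I J; rewrite !mxE.
case: eqP => [Jlast|/eqP/negbTE Jnlast]; last first.
  by rewrite big1 ?addr0 // => j _; rewrite !mxE Jnlast mulr0.
rewrite ifF; last first.
  apply/negbTE; rewrite negb_and Jlast /=; apply/orP; left.
  by rewrite neq_ltn ltn_ord.
rewrite add0r (bigD1 (bpos J).2) //= big1 => [|j jnJ].
  by rewrite !mxE Jlast !eqxx mulr1 addr0; case: (odd _); rewrite ?addr0 ?add0r.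
by rewrite !mxE Jlast eqxx /= eq_sym (negbTE jnJ) mulr0.
Qed.

Lemma mulQmx k X :
  Qmat a k *m X = Gam *m X + (pcol a k + rcol a k) *m lastblk X.
Proof. by rewrite QmatE mulmxDl -mulmxA mul_lastsel. Qed.

Lemma G2_vanish_odd l k : blocks_vanish true (G2 a l k).
Proof.
elim: l k => [|l IHl] k /=; first exact: blocks_vanish_rcol.
apply: (@blocks_vanish_Gam false); apply: blocks_vanishD; first exact: blocks_vanish_pcol.
exact/(@blocks_vanish_Gam true)/IHl.
Qed.

Lemma lastblk_Ghat l k : lastblk (Ghat a l k) = 0.
Proof.
apply: lastblk_vanish_even; apply: blocks_vanishD; first exact: blocks_vanish_pcol.
exact: blocks_vanish_Gam (G2_vanish_odd _ _).
Qed.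

Lemma Fcol0 k : Fcol a k 0 = rcol a k.
Proof. by rewrite /Fcol /= mul1mx addr0. Qed.

Lemma FcolS k l : Fcol a k l.+1 = Qmat a k *m Fcol a (k + 1) l.
Proof. by rewrite /Fcol /= -mulmxA intS addrA. Qed.

Lemma Fcol_expansionS k l (I : seq nat) (j : nat -> nat) (c : nat -> 'M[R]_n) G :
  Fcol a (k + 1) l = \sum_(i <- I) Fcol a (k + 1) (j i) *m c i + G ->
  Fcol a k l.+1 = \sum_(i <- I) Fcol a k (j i).+1 *m c i + Qmat a k *m G.
Proof.
move=> FE; rewrite FcolS FE mulmxDr mulmx_sumr; congr (_ + _).
by apply: eq_bigr => i _; rewrite mulmxA -FcolS.
Qed.

Definition even_expansion l k :=
  Fcol a k (2 * l) =
    \sum_(1 <= r < l.+1) Fcol a k (2 * r).-1 *m alpha a (2 * l) (2 * r).-1 k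
    + G2 a l k.

Definition odd_expansion l k :=
  Fcol a k (2 * l).+1 =
    \sum_(0 <= r < l.+1) Fcol a k (2 * r) *m alpha a (2 * l).+1 (2 * r) k
    + Ghat a l k.

Lemma even_expansion0 k : even_expansion 0 k.
Proof. by rewrite /even_expansion big_geq // add0r muln0 Fcol0. Qed.

Lemma alpha_odd0 l k : alpha a (2 * l).+1 0 k = lastblk (G2 a l (k + 1)).
Proof. by rewrite mul2n /= odd_double doubleK. Qed.

Lemma alpha_oddS l r k : alpha a (2 * l).+1 r.+1 k = alpha a (2 * l) r (k + 1).
Proof. by rewrite /= andbF. Qed.

Lemma alpha_evenS l r k : alpha a (2 * l).+2 r.+1 k = alpha a (2 * l).+1 r (k + 1).
Proof. by rewrite /= andbF. Qed.

Lemma odd_expansion_from_even l k : even_expansion l (k + 1) -> odd_expansion l k.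
Proof.
rewrite /even_expansion /odd_expansion big_add1 succnK => /Fcol_expansionS ->.
rewrite big_nat_recl // muln0 Fcol0 alpha_odd0 mulQmx mulmxDl /Ghat /Ghat_of.
have -> : \sum_(0 <= r < l)
            Fcol a k (2 * r.+1).-1.+1 *m alpha a (2 * l) (2 * r.+1).-1 (k + 1)
        = \sum_(0 <= r < l) Fcol a k (2 * r.+1) *m alpha a (2 * l).+1 (2 * r.+1) k.
  by apply: eq_bigr => r _; rewrite mulnS add2n alpha_oddS.
rewrite [_ + Gam *m _]addrC [rcol _ _ *m _ + _]addrC -addrA; congr (_ + _).
by rewrite [RHS]addrCA [X in _ = _ + X]addrC.
Qed.

Lemma even_expansionS_from_odd l k : odd_expansion l (k + 1) -> even_expansion l.+1 k.
Proof.
rewrite /odd_expansion /even_expansion big_add1 succnK [(2 * l.+1)%N]mulnS add2n.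
move=> /Fcol_expansionS ->; rewrite mulQmx lastblk_Ghat mulmx0 addr0; congr (_ + _).
by apply: eq_bigr => r _; rewrite mulnS add2n alpha_evenS.
Qed.

End BlockColumns.

Theorem mainTheorem6 (R : comNzRingType) (n s N : nat)
  (a : int -> 'I_(s.*2.+1) -> 'M[R]_n)
  (hn : (1 <= n)%N) (hs : (1 <= s)%N) (hN : (1 <= N)%N)
  (hper : forall k : int, a (k + N%:Z) = a k) :
  forall (k : int) (l : nat),
    Fcol a k (2 * l) =
      \sum_(1 <= r < l.+1) Fcol a k (2 * r).-1 *m alpha a (2 * l) (2 * r).-1 k
      + G2 a l k
  /\
    Fcol a k (2 * l).+1 =
      \sum_(0 <= r < l.+1) Fcol a k (2 * r) *m alpha a (2 * l).+1 (2 * r) k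
      + Ghat a l k.
Proof.
have even_exp : forall l k, even_expansion a l k.
  elim=> [|l IHl] k; first exact: even_expansion0.
  exact/even_expansionS_from_odd/odd_expansion_from_even/IHl.
by move=> k l; split; [exact: even_exp | exact/odd_expansion_from_even/even_exp].
Qed.
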